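(* Let $X$ be a standard one-dimensional Brownian motion starting at $0$, $p$ the atomic proposition with $X(\omega),t\models_n p$ iff $X_t(\omega)\geq1$, and $\phi_1:=\Box_{(1,2)}(\Diamond_{(1,4)}p\wedge\lnot\Diamond_{(1,3)}p)$, $\phi_2:=(\Diamond_{(1,3)}\phi_1)\wedge(\lnot\Diamond_{(1,2)}\phi_1)\wedge(\lnot\Diamond_{(2,3)}\phi_1)$, $\phi_3:=\Diamond_{(1,2)}\phi_2$, $\psi:=(\lnot p)\wedge(\lnot\Diamond_{(0,8)}p)\wedge\phi_3$. Let $n\geq2$. Then $X(\omega),0\not\models_n\psi$ for every $\omega\in\Omega$.
   Context: $\mathbb{N}/n:=\{k/n : k\in\mathbb{N}\}$. Discrete semantics at $t\in\mathbb{N}/n$: $\lnot,\wedge$ classical; $X(\omega),t\models_n\Diamond_I\phi$ iff $\exists s\in I\cap\mathbb{N}/n$ with $X(\omega),t+s\models_n\phi$; $X(\omega),t\models_n\Box_I\phi$ iff $\forall s\in I\cap\mathbb{N}/n$, $X(\omega),t+s\models_n\phi$. *)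

From HB Require Import structures.
From mathcomp Require Import all_boot all_order all_algebra.
From mathcomp Require Import all_classical all_reals all_analysis.
Set Implicit Arguments. Unset Strict Implicit. Unset Printing Implicit Defensive.
Import Order.TTheory GRing.Theory Num.Theory.
Import numFieldTopology.Exports.
Local Open Scope classical_set_scope.
Local Open Scope ring_scope.

(* X t w = X_t(w); only times t >= 0 are meaningful. *)

Definition is_standard_BM {R : realType} {d : measure_display}
    {T : measurableType d} (P : probability T R) (X : R -> T -> R) : Prop :=
  [/\
      (forall t, 0 <= t -> measurable_fun setT (X t)),
      (forall w, X 0 w = 0),
      (forall w, {within `[(0:R), +oo[%classic, continuous (fun t : R => X t w)}),
      (forall s t, 0 <= s -> s < t -> forall B : set R, measurable B ->
         P [set w | B (X t w - X s w)] = normal_prob 0 (Num.sqrt (t - s)) B) &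
      (forall (k : nat) (ts : nat -> R), 0 <= ts 0%N ->
         (forall i, ts i < ts i.+1) ->
         forall B : nat -> set R, (forall i, measurable (B i)) ->
         P (\bigcap_(i in [set j | (j < k)%N]) [set w | B i (X (ts i.+1) w - X (ts i) w)])
         = (\prod_(i < k) P [set w | B i (X (ts i.+1) w - X (ts i) w)%R])%E)].

Inductive mtl (R : realType) : Type :=
| Atom of (R -> Prop)
| Not of mtl R
| And of mtl R & mtl R
| Dia of set R & mtl R
| Box of set R & mtl R.
Arguments Atom {R}. Arguments Not {R}. Arguments And {R}.
Arguments Dia {R}. Arguments Box {R}.

(* sat n x k phi  <->  x, k/n |=_n phi, where x = X(w) is the path and the
   time point t = k/n ranges over N/n; s ranges over I ∩ N/n as s = j/n. *)
Fixpoint sat {R : realType} (n : nat) (x : R -> R) (k : nat) (phi : mtl R) : Prop :=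
  match phi with
  | Atom a => a (x (k%:R / n%:R))
  | Not f => ~ sat n x k f
  | And f g => sat n x k f /\ sat n x k g
  | Dia J f => exists j : nat, J (j%:R / n%:R) /\ sat n x (k + j)%N f
  | Box J f => forall j : nat, J (j%:R / n%:R) -> sat n x (k + j)%N f
  end.

Definition oo {R : realType} (a b : R) : set R := [set s | a < s < b].

Section formulas.
Context {R : realType}.
Definition p_atom : mtl R := Atom (fun v => 1 <= v).
Definition phi1 : mtl R :=
  Box (oo 1 2) (And (Dia (oo 1 4) p_atom) (Not (Dia (oo 1 3) p_atom))).
Definition phi2 : mtl R :=
  And (Dia (oo 1 3) phi1) (And (Not (Dia (oo 1 2) phi1)) (Not (Dia (oo 2 3) phi1))).
Definition phi3 : mtl R := Dia (oo 1 2) phi2.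
Definition psi : mtl R :=
  And (Not p_atom) (And (Not (Dia (oo 0 8) p_atom)) phi3).
End formulas.

(** psi is unsatisfiable on the grid N/n whatever the path.  Unfolding psi, phi1 holds at
    some K+1 with 3n < K+1 < 4n but fails at K and K+2, while p fails on the
    whole window (0, 8n).  Since phi1 holds at K+1 and K+2n+2 < 8n, the path
    avoids p on [K+2n+2, K+4n+1]; since phi1 fails at K, it also avoids p on
    [K+4n+1, K+5n], so the p-time promised to K+1 by its first Box instant is
    exactly K+5n+1.  The Box instants of K+2 are those of K+1 shifted by one,
    except the last, which is served by the p-time K+5n+1 and the two silent
    windows; hence phi1 holds at K+2, a contradiction. *)
From HB Require Import structures.
From mathcomp Require Import all_boot all_order all_algebra.
From mathcomp Require Import all_classical all_reals all_analysis.
From mathcomp Require Import zify.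
Import Order.TTheory GRing.Theory Num.Theory.
Local Open Scope ring_scope.

Lemma oo_nat_div {R : realType} {n : nat} (a b j : nat) : (0 < n)%N ->
  oo (a%:R : R) b%:R (j%:R / n%:R) <-> (a * n < j < b * n)%N.
Proof.
move=> n_gt0; have n_gt0' : (0 : R) < n%:R by rewrite ltr0n.
by rewrite /oo /= ltr_pdivlMr // ltr_pdivrMr // -!natrM !ltr_nat.
Qed.

Lemma sat_Dia_oo {R : realType} (a b : nat) {n : nat} (x : R -> R) (k : nat)
    (f : mtl R) : (0 < n)%N ->
  sat n x k (Dia (oo a%:R b%:R) f) <->
  exists j, (a * n < j < b * n)%N /\ sat n x (k + j) f.
Proof.
move=> n_gt0; split=> -[j [j_range f_j]]; exists j; split=> //.
  exact: (oo_nat_div _ _ _ n_gt0).1 j_range.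
exact: (oo_nat_div _ _ _ n_gt0).2 j_range.
Qed.

Lemma sat_Box_oo {R : realType} (a b : nat) {n : nat} (x : R -> R) (k : nat)
    (f : mtl R) : (0 < n)%N ->
  sat n x k (Box (oo a%:R b%:R) f) <->
  forall j, (a * n < j < b * n)%N -> sat n x (k + j) f.
Proof.
move=> n_gt0; split=> f_box j j_range; apply: f_box.
  exact: (oo_nat_div _ _ _ n_gt0).2 j_range.
exact: (oo_nat_div _ _ _ n_gt0).1 j_range.
Qed.

Definition phi1_pattern (n : nat) (Q : nat -> Prop) (k : nat) : Prop :=
  forall j, (n < j < 2 * n)%N ->
    (exists j', (n < j' < 4 * n)%N /\ Q (k + j + j')%N) /\
    ~ (exists j', (n < j' < 3 * n)%N /\ Q (k + j + j')%N).

Lemma sat_phi1 {R : realType} {n : nat} (x : R -> R) (k : nat) : (0 < n)%N ->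
  sat n x k phi1 <-> phi1_pattern n (fun i => sat n x i p_atom) k.
Proof.
move=> n_gt0; rewrite /phi1 (sat_Box_oo 1 2 _ _ _ n_gt0) mul1n.
have hit_iff j := sat_Dia_oo 1 4 x (k + j) p_atom n_gt0.
have no_hit_iff j := sat_Dia_oo 1 3 x (k + j) p_atom n_gt0.
rewrite !mul1n in hit_iff no_hit_iff.
split=> phi1_k j /phi1_k [hit no_hit]; split.
- exact: (hit_iff j).1 hit.
- by move=> /(no_hit_iff j).2.
- exact: (hit_iff j).2 hit.
- by move=> hit'; apply: no_hit; apply: (no_hit_iff j).1 hit'.
Qed.

Section phi1_pattern_propagation.
Variables (n K : nat) (Q : nat -> Prop).
Hypothesis n_gt1 : (1 < n)%N.
Hypothesis phi1_succK : phi1_pattern n Q K.+1.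
Hypothesis no_Q_start : ~ Q (K + 2 * n + 2)%N.

Lemma phi1_pattern_gap :
  forall i, (K + 2 * n + 2 <= i <= K + 4 * n + 1)%N -> ~ Q i.
Proof.
move=> i i_range Q_i.
have [i_eq | i_gt] : i = (K + 2 * n + 2)%N \/ (K + 2 * n + 2 < i)%N by lia.
  by apply: no_Q_start; rewrite -i_eq.
have [_ []] := phi1_succK n.+1 ltac:(lia).
exists (i - (K + n + 2))%N; split; first lia.
by have -> : (K.+1 + n.+1 + (i - (K + n + 2)) = i)%N by lia.
Qed.

Hypothesis not_phi1_K : ~ phi1_pattern n Q K.

(* A Q-time in this range would give phi1 at K its first Box instant; the
   other instants are those of K+1 shifted by one. *)
Lemma phi1_pattern_gap_ext :
  forall i, (K + 4 * n + 1 <= i <= K + 5 * n)%N -> ~ Q i.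
Proof.
move=> i i_range Q_i; apply: not_phi1_K => j j_range.
have [-> | j_gt] : j = n.+1 \/ (n.+1 < j)%N by lia.
  split.
    exists (i - (K + n + 1))%N; split; first lia.
    by have -> : (K + n.+1 + (i - (K + n + 1)) = i)%N by lia.
  move=> [j' [j'_range Q_j']].
  by apply: (phi1_pattern_gap _ _ Q_j'); lia.
have := phi1_succK j.-1 ltac:(lia).
by have -> : (K.+1 + j.-1 = K + j)%N by lia.
Qed.

Lemma phi1_pattern_hit : Q (K + 5 * n + 1)%N.
Proof.
have [[j' [j'_range Q_j']] _] := phi1_succK n.+1 ltac:(lia).
have [j'_le | j'_gt] : (j' <= 3 * n - 1)%N \/ (3 * n - 1 < j')%N by lia.
  by exfalso; apply: (phi1_pattern_gap _ _ Q_j'); lia.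
have [j'_le' | j'_eq] : (j' <= 4 * n - 2)%N \/ j' = (4 * n - 1)%N by lia.
  by exfalso; apply: (phi1_pattern_gap_ext _ _ Q_j'); lia.
move: Q_j'; rewrite j'_eq.
by have -> : (K.+1 + n.+1 + (4 * n - 1) = K + 5 * n + 1)%N by lia.
Qed.

Lemma phi1_pattern_succ : phi1_pattern n Q K.+2.
Proof.
move=> j j_range.
have [-> | j_lt] : j = (2 * n - 1)%N \/ (j < 2 * n - 1)%N by lia.
  split.
    exists (3 * n)%N; split; first lia.
    have -> : (K.+2 + (2 * n - 1) + 3 * n = K + 5 * n + 1)%N by lia.
    exact: phi1_pattern_hit.
  move=> [j' [j'_range Q_j']].
  have [j'_le | j'_gt] : (j' <= 2 * n)%N \/ (2 * n < j')%N by lia.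
    by apply: (phi1_pattern_gap _ _ Q_j'); lia.
  by apply: (phi1_pattern_gap_ext _ _ Q_j'); lia.
have := phi1_succK j.+1 ltac:(lia).
by have -> : (K.+1 + j.+1 = K.+2 + j)%N by lia.
Qed.

End phi1_pattern_propagation.

Theorem lemma5p5 (R : realType) (d : measure_display) (T : measurableType d)
    (P : probability T R) (X : R -> T -> R) :
  is_standard_BM P X ->
  forall n : nat, (2 <= n)%N ->
  forall w : T, ~ sat n (fun t => X t w) 0%N (@psi R).
Proof.
move=> _ n n_ge2 w; set x := fun t => X t w.
have n_gt0 : (0 < n)%N by lia.
case=> _ [no_p phi3_0].
have [j1 [j1_range [phi2_dia [no_phi1_12 no_phi1_23]]]] :=
  (sat_Dia_oo 1 2 x 0 phi2 n_gt0).1 phi3_0.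
have [j2 [j2_range phi1_j2]] := (sat_Dia_oo 1 3 x j1 phi1 n_gt0).1 phi2_dia.
have no_phi1 j : (n < j < 3 * n)%N -> j != (2 * n)%N -> ~ sat n x (j1 + j) phi1.
  move=> j_range j_ne phi1_j.
  have [j_lt | j_gt] : (j < 2 * n)%N \/ (2 * n < j)%N by lia.
    apply: no_phi1_12; apply: (sat_Dia_oo 1 2 x j1 phi1 n_gt0).2.
    by exists j; split; first lia.
  apply: no_phi1_23; apply: (sat_Dia_oo 2 3 x j1 phi1 n_gt0).2.
  by exists j; split; first lia.
have /eqP j2E : j2 == (2 * n)%N.
  by apply/negPn/negP => /(no_phi1 j2 ltac:(lia)); apply.
apply: (no_phi1 (2 * n + 1)%N); [lia | lia |].
apply/(sat_phi1 _ _ n_gt0).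
have -> : (j1 + (2 * n + 1) = (j1 + (2 * n - 1)).+2)%N by lia.
apply: phi1_pattern_succ => //.
- have := (sat_phi1 x _ n_gt0).1 phi1_j2.
  by rewrite j2E; have -> : (j1 + 2 * n = (j1 + (2 * n - 1)).+1)%N by lia.
- move=> p_K; apply: no_p; apply: (sat_Dia_oo 0 8 x 0 p_atom n_gt0).2.
  by exists (j1 + (2 * n - 1) + 2 * n + 2)%N; split; first lia.
- by move/(sat_phi1 _ _ n_gt0); apply: no_phi1; lia.
Qed.
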